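(* If $Q$ and $Q'$ are proper quadrilaterals in $K^2$ sharing the same vertices, then the bisectors of $Q$ and $Q'$ are the same. Also, $\Phi_Q=\lambda\Phi_{Q'}$ for some $\lambda\in K$, and two lines are $Q$-orthogonal if and only if they are $Q'$-orthogonal.
   Context: $K$ is a field of characteristic $\neq 2$. Every line $L$ in $K^2$ has an equation $tX-uY+v=0$ normalized so that $t=1$ if $u=0$ and $u=1$ if $u\neq 0$; coefficients denoted $t_L,u_L,v_L$. A quadrilateral $Q=ABA'B'$ consists of four distinct lines $A,B,A',B'$ (sides), not all through one point, with adjacent sides ($A,B$; $B,A'$; $A',B'$; $B',A$) not parallel; opposite sides may be parallel. Vertices: $A\cap B$, $B\cap A'$, $A'\cap B'$, $B'\cap A$. $Q$ is proper if no three sides pass through a common point (so the four vertices are distinct). Let $\alpha=t_Au_Bu_{A'}u_{B'}-u_At_Bu_{A'}u_{B'}+u_Au_Bt_{A'}u_{B'}-u_Au_Bu_{A'}t_{B'}$, $\beta=t_Au_Bt_{A'}u_{B'}-u_At_Bu_{A'}t_{B'}$, $\gamma=t_At_Bt_{A'}u_{B'}-t_At_Bu_{A'}t_{B'}+t_Au_Bt_{A'}t_{B'}-u_At_Bt_{A'}t_{B'}$, $\Phi_Q(X,Y)=\gamma X^2-2\beta XY+\alpha Y^2$, and $\langle \mathbf v,\mathbf w\rangle_Q=\mathbf v^T\begin{pmatrix}\gamma&-\beta\\-\beta&\alpha\end{pmatrix}\mathbf w$. Lines $\ell_1,\ell_2$ are $Q$-orthogonal if $\langle (u_{\ell_1},t_{\ell_1}),(u_{\ell_2},t_{\ell_2})\rangle_Q=0$.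 A line $\ell$ crosses a pair $\{\ell_1,\ell_2\}$ if it is distinct from both and not parallel to both; $\mathrm{mid}_{\{\ell_1,\ell_2\}}(\ell)$ is the midpoint of the points where $\ell$ meets $\ell_1,\ell_2$ (the point at infinity of $\ell$ if one of them is at infinity). $\ell$ bisects $Q$ (is a bisector) if $\mathrm{mid}_{\mathsf P}(\ell)$ is the same for all pairs $\mathsf P$ among $\{A,A'\},\{B,B'\}$ that $\ell$ crosses; this common point is the midpoint of the bisector. *)

From HB Require Import structures.
From mathcomp Require Import all_boot all_order all_algebra.
Set Implicit Arguments. Unset Strict Implicit. Unset Printing Implicit Defensive.
Import Order.TTheory GRing.Theory Num.Theory.
Local Open Scope ring_scope.

Section Geometry.
Variable K : fieldType.

(* A line  t X - u Y + v = 0  is represented by its coefficient triple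
   ((t, u), v), subject to the normalization of the paper. *)
Definition line := (K * K * K)%type.
Definition tL (l : line) : K := l.1.1.
Definition uL (l : line) : K := l.1.2.
Definition vL (l : line) : K := l.2.

Definition is_line (l : line) : bool :=
  if uL l == 0 then tL l == 1 else uL l == 1.

Definition point := (K * K)%type.

Definition on_line (p : point) (l : line) : Prop :=
  tL l * p.1 - uL l * p.2 + vL l = 0.

(* parallel lines: proportional (hence, after normalization, equal) (t,u) *)
Definition parallel (l m : line) : Prop := uL l * tL m = tL l * uL m.

(* points of the projective closure: affine points, or the point at
   infinity in the direction of the lines with normalized (t,u) *)
Inductive ppoint := Fin of point | Inf of K & K.

(* the point where l meets m (Cramer's rule when not parallel) *)
Definition meet (l m : line) : ppoint :=
  let D := uL l * tL m - tL l * uL m in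
  if D == 0 then Inf (tL l) (uL l)
  else Fin ((vL l * uL m - uL l * vL m) / D, (vL l * tL m - tL l * vL m) / D).

Definition crosses (l l1 l2 : line) : Prop :=
  l <> l1 /\ l <> l2 /\ ~ (parallel l l1 /\ parallel l l2).

Definition mid (l1 l2 l : line) : ppoint :=
  match meet l l1, meet l l2 with
  | Fin p, Fin q => Fin ((p.1 + q.1) / 2%:R, (p.2 + q.2) / 2%:R)
  | _, _ => Inf (tL l) (uL l)
  end.

Record quad := Quad { qA : line; qB : line; qA' : line; qB' : line }.

Definition is_quad (Q : quad) : Prop :=
  let: Quad A B A' B' := Q in
  [/\ is_line A, is_line B, is_line A' & is_line B'] /\
  [/\ A <> B, A <> A', A <> B' & B <> A'] /\ [/\ B <> B' & A' <> B'] /\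
  ~ (exists p, [/\ on_line p A, on_line p B, on_line p A' & on_line p B']) /\
  [/\ ~ parallel A B, ~ parallel B A', ~ parallel A' B' & ~ parallel B' A].

Definition is_proper_quad (Q : quad) : Prop :=
  let: Quad A B A' B' := Q in
  is_quad Q /\
  ~ (exists p, [/\ on_line p A, on_line p B & on_line p A']) /\
  ~ (exists p, [/\ on_line p A, on_line p B & on_line p B']) /\
  ~ (exists p, [/\ on_line p A, on_line p A' & on_line p B']) /\
  ~ (exists p, [/\ on_line p B, on_line p A' & on_line p B']).

Definition is_vertex (Q : quad) (p : point) : Prop :=
  let: Quad A B A' B' := Q in
  (on_line p A /\ on_line p B) \/ (on_line p B /\ on_line p A') \/
  (on_line p A' /\ on_line p B') \/ (on_line p B' /\ on_line p A).

Definition alphaQ (Q : quad) : K :=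
  let: Quad A B A' B' := Q in
  tL A * uL B * uL A' * uL B' - uL A * tL B * uL A' * uL B'
  + uL A * uL B * tL A' * uL B' - uL A * uL B * uL A' * tL B'.

Definition betaQ (Q : quad) : K :=
  let: Quad A B A' B' := Q in
  tL A * uL B * tL A' * uL B' - uL A * tL B * uL A' * tL B'.

Definition gammaQ (Q : quad) : K :=
  let: Quad A B A' B' := Q in
  tL A * tL B * tL A' * uL B' - tL A * tL B * uL A' * tL B'
  + tL A * uL B * tL A' * tL B' - uL A * tL B * tL A' * tL B'.

Definition PhiQ (Q : quad) (X Y : K) : K :=
  gammaQ Q * X ^+ 2 - 2%:R * betaQ Q * X * Y + alphaQ Q * Y ^+ 2.

Definition innerQ (Q : quad) (v w : K * K) : K :=
  gammaQ Q * v.1 * w.1 - betaQ Q * v.1 * w.2 - betaQ Q * v.2 * w.1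
  + alphaQ Q * v.2 * w.2.

Definition Q_orthogonal (Q : quad) (l1 l2 : line) : Prop :=
  innerQ Q (uL l1, tL l1) (uL l2, tL l2) = 0.

Definition bisects (Q : quad) (l : line) : Prop :=
  crosses l (qA Q) (qA' Q) -> crosses l (qB Q) (qB' Q) ->
  mid (qA Q) (qA' Q) l = mid (qB Q) (qB' Q) l.

End Geometry.

(* Parametrize a normalized line l as s |-> base + s (u_l, t_l); another line L
   meets it where a_L + s b_L = 0.  The midpoint of the points where l meets L
   and M is thus the projective point (b_L b_M : a_L b_M + a_M b_L) of l, and l
   bisects Q iff the midpoints for {A, A'} and {B, B'} agree, i.e. iff a 2x2
   determinant vanishes.  This determinant, like alpha, beta and gamma, is
   multilinear in the coefficients of the four sides.  Each side of a proper
   quadrilateral is a nonzero multiple of the line through its two vertices,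
   and reordering the four vertices changes all these expressions by the same
   sign, so Q and Q' have proportional bisector determinants and Phi
   coefficients. *)

From mathcomp Require Import all_boot all_algebra ring.
Import GRing.Theory.
Local Open Scope ring_scope.
Set Implicit Arguments. Unset Strict Implicit.

Section QuadrilateralBisectors.
Variable K : fieldType.
Implicit Types (l L M : line K) (p q : point K) (Q : quad K).

Definition line_eval L p : K := tL L * p.1 - uL L * p.2 + vL L.

Definition dir_det l L : K := uL l * tL L - tL l * uL L.

Definition base_point l : point K := ((uL l - 1) * vL l, uL l * vL l).

Definition line_point l (s : K) : point K :=
  ((base_point l).1 + s * uL l, (base_point l).2 + s * tL l).

Lemma is_lineP l : is_line l -> (uL l = 0 /\ tL l = 1) \/ uL l = 1.
Proof. by rewrite /is_line; case: eqP => [-> /eqP|_ /eqP]; auto. Qed.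

Lemma parallel_dir_det l L : parallel l L <-> dir_det l L = 0.
Proof.
rewrite /parallel /dir_det; split => [->|/eqP]; first exact: subrr.
by rewrite subr_eq0 => /eqP.
Qed.

Lemma line_eval_base_point l : is_line l -> line_eval l (base_point l) = 0.
Proof.
by rewrite /line_eval /=; case/is_lineP => [[-> ->]|->]; ring.
Qed.

Lemma line_point_inj l : is_line l -> injective (line_point l).
Proof.
move=> hl s1 s2 [e1 e2]; case/is_lineP: hl => [[_ ht]|hu].
  by move: e2; rewrite ht !mulr1 => /addrI.
by move: e1; rewrite hu !mulr1 => /addrI.
Qed.

Lemma meet_line_point l L : is_line l -> dir_det l L != 0 ->
  meet l L = Fin (line_point l (- line_eval L (base_point l) / dir_det l L)).
Proof.
rewrite /meet -/(dir_det l L) => /is_lineP + /[dup] D0 /negPf ->; move: D0.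
rewrite /line_point /base_point /line_eval /dir_det.
case: l => [[t u] v]; rewrite /tL /uL /vL /=.
by move=> D0 [[hu ht]|hu]; rewrite ?hu ?ht ?(mul0r, mul1r, sub0r) in D0 *;
  congr (Fin (_, _)); field.
Qed.

Lemma meet_parallel l L : dir_det l L = 0 -> meet l L = Inf (tL l) (uL l).
Proof. by rewrite /meet -/(dir_det l L) => ->; rewrite eqxx. Qed.

Definition det2 (w w' : K * K) : K := w.1 * w'.2 - w.2 * w'.1.

Definition proj_param (w : K * K) : option K :=
  if w.1 == 0 then None else Some (w.2 / w.1).

Lemma proj_param_eq w w' : w != (0, 0) -> w' != (0, 0) ->
  proj_param w = proj_param w' <-> det2 w w' = 0.
Proof.
case: w w' => [x y] [x' y']; rewrite /proj_param /det2 !xpair_eqE /=.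
case: (eqVneq x 0) => [-> /= y0|x0 _]; case: (eqVneq x' 0) => [-> /= y'0|x'0 _].
- by rewrite mulr0 mul0r subrr.
- by split=> // /eqP; rewrite mul0r sub0r oppr_eq0 mulf_eq0 (negPf y0) (negPf x'0).
- by split=> // /eqP; rewrite mulr0 subr0 mulf_eq0 (negPf x0) (negPf y'0).
split=> [[/eqP]|/eqP]; first by rewrite eqr_div // => /eqP ->; ring.
by rewrite subr_eq0 => /eqP e; congr Some; apply/eqP; rewrite eqr_div // -e mulrC.
Qed.

Definition param_ppoint l (o : option K) : ppoint K :=
  if o is Some r then Fin (line_point l (- r / 2%:R)) else Inf (tL l) (uL l).

Lemma param_ppoint_inj l : (2%:R : K) != 0 -> is_line l -> injective (param_ppoint l).
Proof.
move=> h2 hl [r|] [r'|] //= [e1 e2]; congr Some.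
have /(line_point_inj hl)/(mulIf (invr_neq0 h2))/oppr_inj // :
  line_point l (- r / 2%:R) = line_point l (- r' / 2%:R) by rewrite /line_point e1 e2.
Qed.

(* (x : y) stands for the midpoint parameter -y / (2 x) = -(a_L / b_L + a_M / b_M) / 2,
   L meeting l at the parameter -a_L / b_L. *)
Definition mid_coords l L M : K * K :=
  (dir_det l L * dir_det l M,
   line_eval L (base_point l) * dir_det l M + line_eval M (base_point l) * dir_det l L).

Lemma mid_param l L M : (2%:R : K) != 0 -> is_line l ->
  mid L M l = param_ppoint l (proj_param (mid_coords l L M)).
Proof.
move=> h2 hl; rewrite /mid /proj_param /= mulf_eq0.
case: (eqVneq (dir_det l L) 0) => [bL|bL]; first by rewrite (meet_parallel bL).
case: (eqVneq (dir_det l M) 0) => [bM|bM].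
  by rewrite (meet_line_point hl bL) (meet_parallel bM).
rewrite (meet_line_point hl bL) (meet_line_point hl bM) /=.
by rewrite /line_point /=; congr (Fin (_, _)); field; rewrite h2 bL bM.
Qed.

Lemma dir_det_normalized l L : is_line l -> is_line L -> dir_det l L = 0 ->
  tL L = tL l /\ uL L = uL l.
Proof.
rewrite /dir_det => /is_lineP[[-> ->]|->] /is_lineP[[-> ->]|->] /eqP;
  rewrite ?(mul0r, mulr0, mul1r, mulr1, sub0r, subr0, oppr_eq0, subr_eq0) //.
- by rewrite eq_sym oner_eq0.
- by rewrite oner_eq0.
- by move/eqP.
Qed.

Lemma line_eval_parallel l L : is_line l -> is_line L -> dir_det l L = 0 -> l <> L ->
  line_eval L (base_point l) != 0.
Proof.
move=> hl hL /(dir_det_normalized hl hL)[ht hu] lL.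
have -> : line_eval L (base_point l) = line_eval l (base_point l) + (vL L - vL l).
  by rewrite /line_eval ht hu; ring.
rewrite line_eval_base_point // add0r subr_eq0; apply: contra_not_neq lL => hv.
move: ht hu hv; case: l {hl} => [[t u] v]; case: L {hL} => [[? ?] ?].
by rewrite /tL /uL /vL /= => -> -> ->.
Qed.

Lemma dir_det_id l : dir_det l l = 0.
Proof. by rewrite /dir_det mulrC subrr. Qed.

Lemma crosses_mid_coords l L M : is_line l -> is_line L -> is_line M ->
  crosses l L M <-> mid_coords l L M != (0, 0).
Proof.
move=> hl hL hM.
rewrite /crosses !parallel_dir_det xpair_eqE negb_and /= mulf_eq0 negb_or.
split=> [[lL [lM npar]]|].
  case: (eqVneq (dir_det l L) 0) => [bL|bL]; case: (eqVneq (dir_det l M) 0) => [bM|bM] //=.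
  - by case: npar.
  - by rewrite bL mulr0 addr0 mulf_neq0 // line_eval_parallel.
  - by rewrite bM mulr0 add0r mulf_neq0 // line_eval_parallel.
move=> w0; split; [|split].
- move=> lL; move: w0; rewrite -lL dir_det_id line_eval_base_point //.
  by rewrite !(mul0r, mulr0, add0r, addr0, eqxx, andbF).
- move=> lM; move: w0; rewrite -lM dir_det_id line_eval_base_point //.
  by rewrite !(mul0r, mulr0, add0r, addr0, eqxx, andbF).
- by case=> bL bM; move: w0; rewrite bL bM !mulr0 addr0 eqxx.
Qed.

Definition bisector_det Q l : K :=
  det2 (mid_coords l (qA Q) (qA' Q)) (mid_coords l (qB Q) (qB' Q)).

Lemma bisects_det Q l : (2%:R : K) != 0 -> is_quad Q -> is_line l ->
  bisects Q l <-> bisector_det Q l = 0.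
Proof.
move=> h2 + hl; case: Q => A B A' B' [[hA hB hA' hB'] _].
rewrite /bisects /bisector_det /= !crosses_mid_coords // !mid_param //.
set w := mid_coords l A A'; set w' := mid_coords l B B'.
have [->|w0] := eqVneq w (0, 0); first by rewrite /det2 !mul0r subrr.
have [->|w'0] := eqVneq w' (0, 0); first by rewrite /det2 !mulr0 subrr.
rewrite -proj_param_eq //; split=> [/(_ isT isT)/(param_ppoint_inj h2 hl)|->] //.
Qed.

Definition line_through p q : line K :=
  (q.2 - p.2, q.1 - p.1, (q.1 - p.1) * p.2 - (q.2 - p.2) * p.1).

Definition scale_line (c : K) L : line K := (c * tL L, c * uL L, c * vL L).

Lemma normalized_line_through L p q : is_line L -> on_line p L -> on_line q L ->
  p <> q -> exists2 c, c != 0 & L = scale_line c (line_through p q).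
Proof.
case: L => [[t u] v]; case: p => p1 p2; case: q => q1 q2 /is_lineP.
rewrite /on_line /scale_line /line_through /tL /uL /vL /=.
case=> [[-> ->]|->] hp hq pq; rewrite ?mul0r ?mul1r ?subr0 in hp hq.
  have e1 : q1 = p1 by apply: (addIr v); rewrite hp hq.
  have e2 : q2 - p2 != 0 by rewrite subr_eq0; apply: contra_not_neq pq => ->; rewrite e1.
  exists (q2 - p2)^-1; first by rewrite invr_eq0.
  have ev : v = - p1 by apply/eqP; rewrite -addr_eq0 addrC hp.
  by rewrite e1 ev subrr; congr (_, _, _); field.
have eq2 : q2 = t * q1 + v by apply/eqP; rewrite eq_sym -subr_eq0 -hq; apply/eqP; ring.
have ev : v = p2 - t * p1 by apply/eqP; rewrite -subr_eq0 -hp; apply/eqP; ring.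
have e1 : q1 - p1 != 0.
  rewrite subr_eq0; apply: contra_not_neq pq => e; rewrite eq2 ev e.
  by congr (_, _); ring.
exists (q1 - p1)^-1; first by rewrite invr_eq0.
by rewrite eq2 ev; congr (_, _, _); field.
Qed.

Lemma meet_exists L M : ~ parallel L M -> exists p, on_line p L /\ on_line p M.
Proof.
move=> /parallel_dir_det/eqP D0.
exists ((vL L * uL M - uL L * vL M) / dir_det L M,
        (vL L * tL M - tL L * vL M) / dir_det L M).
by rewrite /on_line /dir_det /= in D0 *; split; field.
Qed.

Lemma meet_unique L M p q : ~ parallel L M ->
  on_line p L -> on_line p M -> on_line q L -> on_line q M -> p = q.
Proof.
move=> /parallel_dir_det/eqP D0 hpL hpM hqL hqM.
have ex : dir_det L M * (p.1 - q.1) =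
    uL L * (line_eval M p - line_eval M q) - uL M * (line_eval L p - line_eval L q).
  by rewrite /line_eval /dir_det; ring.
have ey : dir_det L M * (p.2 - q.2) =
    tL L * (line_eval M p - line_eval M q) - tL M * (line_eval L p - line_eval L q).
  by rewrite /line_eval /dir_det; ring.
rewrite [line_eval L p]hpL [line_eval M p]hpM [line_eval L q]hqL [line_eval M q]hqM in ex ey.
move/eqP: ex; rewrite subrr !mulr0 subrr mulf_eq0 (negPf D0) subr_eq0 => /eqP ex.
move/eqP: ey; rewrite subrr !mulr0 subrr mulf_eq0 (negPf D0) subr_eq0 => /eqP ey.
exact: injective_projections.
Qed.

Definition vertex_quad (P1 P2 P3 P4 : point K) : quad K :=
  Quad (line_through P1 P4) (line_through P1 P2) (line_through P2 P3) (line_through P3 P4).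

Definition scale_quad (cA cB cA' cB' : K) Q : quad K :=
  Quad (scale_line cA (qA Q)) (scale_line cB (qB Q))
       (scale_line cA' (qA' Q)) (scale_line cB' (qB' Q)).

Definition proportional (c : K) Q Q' : Prop :=
  (forall l, bisector_det Q l = c * bisector_det Q' l) /\
  [/\ gammaQ Q = c * gammaQ Q', betaQ Q = c * betaQ Q' & alphaQ Q = c * alphaQ Q'].

Lemma proportional_trans c d Q1 Q2 Q3 :
  proportional c Q1 Q2 -> proportional d Q2 Q3 -> proportional (c * d) Q1 Q3.
Proof.
move=> [b12 [g12 be12 a12]] [b23 [g23 be23 a23]]; split=> [l|].
  by rewrite b12 b23 mulrA.
by rewrite g12 g23 be12 be23 a12 a23 !mulrA.
Qed.

Lemma proportional_sym c Q Q' : c != 0 -> proportional c Q Q' -> proportional c^-1 Q' Q.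
Proof.
move=> c0 [b [g be a]]; split=> [l|]; first by rewrite b mulKf.
by rewrite g be a !mulKf.
Qed.

Lemma proportional_scale_quad cA cB cA' cB' Q :
  proportional (cA * cB * cA' * cB') (scale_quad cA cB cA' cB' Q) Q.
Proof.
case: Q => A B A' B'; split=> [l|].
  rewrite /bisector_det /det2 /mid_coords /line_eval /dir_det /scale_line.
  by rewrite /tL /uL /vL /=; ring.
by rewrite /gammaQ /betaQ /alphaQ /scale_line /tL /uL /=; split; ring.
Qed.

Lemma mulf_eq0_iff (c x : K) : c != 0 -> c * x = 0 <-> x = 0.
Proof.
by move=> c0; split=> [/eqP|->]; [rewrite mulf_eq0 (negPf c0) => /eqP | rewrite mulr0].
Qed.

Lemma bisects_proportional c Q Q' l : (2%:R : K) != 0 -> c != 0 ->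
  is_quad Q -> is_quad Q' -> is_line l -> proportional c Q Q' ->
  bisects Q l <-> bisects Q' l.
Proof.
by move=> h2 c0 hQ hQ' hl [b _]; rewrite !bisects_det // b mulf_eq0_iff.
Qed.

Lemma Q_orthogonal_proportional c Q Q' l1 l2 : c != 0 -> proportional c Q Q' ->
  Q_orthogonal Q l1 l2 <-> Q_orthogonal Q' l1 l2.
Proof.
move=> c0 [_ [g be a]]; rewrite /Q_orthogonal.
suff -> : forall v w, innerQ Q v w = c * innerQ Q' v w by exact: mulf_eq0_iff.
by move=> v w; rewrite /innerQ g be a; ring.
Qed.

Lemma proper_quadW Q : is_proper_quad Q -> is_quad Q.
Proof. by case: Q => A B A' B' []. Qed.

Lemma proper_quad_vertices Q : is_proper_quad Q ->
  exists P1 P2 P3 P4 : point K,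
    [/\ uniq [:: P1; P2; P3; P4],
         forall p, is_vertex Q p <-> p \in [:: P1; P2; P3; P4]
       & exists2 c, c != 0 & proportional c Q (vertex_quad P1 P2 P3 P4)].
Proof.
case: Q => A B A' B' [[[lA lB lA' lB'] [_ [_ [_ [pAB pBA' pA'B' pB'A]]]]]].
move=> [nABA' [nABB' [nAA'B' nBA'B']]].
have [P1 [h1A h1B]] := meet_exists pAB.
have [P2 [h2B h2A']] := meet_exists pBA'.
have [P3 [h3A' h3B']] := meet_exists pA'B'.
have [P4 [h4B' h4A]] := meet_exists pB'A.
have d12 : P1 <> P2 by move=> e; apply: nABA'; exists P1; rewrite {3}e.
have d13 : P1 <> P3 by move=> e; apply: nABA'; exists P1; rewrite {3}e.
have d14 : P1 <> P4 by move=> e; apply: nABB'; exists P1; rewrite {3}e.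
have d23 : P2 <> P3 by move=> e; apply: nBA'B'; exists P2; rewrite {3}e.
have d24 : P2 <> P4 by move=> e; apply: nAA'B'; exists P2; rewrite {1 3}e.
have d34 : P3 <> P4 by move=> e; apply: nAA'B'; exists P3; rewrite {1}e.
exists P1, P2, P3, P4; split.
- by rewrite /= !inE !negb_or; repeat (apply/andP; split); apply/eqP.
- move=> p; rewrite !inE; split.
    case=> [[hA hB]|[[hB hA']|[[hA' hB']|[hB' hA]]]].
    + by rewrite (meet_unique pAB hA hB h1A h1B) eqxx.
    + by rewrite (meet_unique pBA' hB hA' h2B h2A') eqxx orbT.
    + by rewrite (meet_unique pA'B' hA' hB' h3A' h3B') eqxx !orbT.
    + by rewrite (meet_unique pB'A hB' hA h4B' h4A) eqxx !orbT.
  by case/or4P=> /eqP->; [left | right; left | right; right; left | right; right; right].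
have [cA cA0 ->] := normalized_line_through lA h1A h4A d14.
have [cB cB0 ->] := normalized_line_through lB h1B h2B d12.
have [cA' cA'0 ->] := normalized_line_through lA' h2A' h3A' d23.
have [cB' cB'0 ->] := normalized_line_through lB' h3B' h4B' d34.
exists (cA * cB * cA' * cB'); first by rewrite !mulf_neq0.
exact: (proportional_scale_quad cA cB cA' cB' (vertex_quad P1 P2 P3 P4)).
Qed.

Local Ltac proportional_by s :=
  exists s; [by auto | split; last first];
    [ rewrite /gammaQ /betaQ /alphaQ; split
    | move=> l; rewrite /bisector_det /det2 /mid_coords /line_eval /dir_det /base_point ];
    rewrite /line_through /tL /uL /vL /=; ring.

Lemma vertex_quad_perm (P1 P2 P3 P4 R1 R2 R3 R4 : point K) :
  uniq [:: P1; P2; P3; P4] -> perm_eq [:: R1; R2; R3; R4] [:: P1; P2; P3; P4] ->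
  exists2 s : K, s = 1 \/ s = -1 &
    proportional s (vertex_quad R1 R2 R3 R4) (vertex_quad P1 P2 P3 P4).
Proof.
(* Repeated vertices contradict uniqueness; each of the 24 permutations is a
   polynomial identity with sign 1 or -1. *)
move=> uP RP; have uR : uniq [:: R1; R2; R3; R4] by rewrite (perm_uniq RP).
have inP : all (mem [:: P1; P2; P3; P4]) [:: R1; R2; R3; R4].
  by apply/allP => x; rewrite (perm_mem RP).
move: inP uR; rewrite /= !inE !andbT.
case/and4P; do 4!case/or4P=> /eqP->; rewrite ?eqxx ?orbT ?andbF //= => _.
all: first [proportional_by (1 : K) | proportional_by (-1 : K)].
Qed.

End QuadrilateralBisectors.

Unset Implicit Arguments.

Theorem proposition3p4 (K : fieldType) (Q Q' : quad K) :
  (2%:R : K) != 0 ->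
  is_proper_quad Q -> is_proper_quad Q' ->
  (forall p : point K, is_vertex Q p <-> is_vertex Q' p) ->
  (forall l : line K, is_line l -> (bisects Q l <-> bisects Q' l)) /\
  (exists lambda : K,
     gammaQ Q = lambda * gammaQ Q' /\ betaQ Q = lambda * betaQ Q' /\
     alphaQ Q = lambda * alphaQ Q') /\
  (forall l1 l2 : line K, is_line l1 -> is_line l2 ->
     (Q_orthogonal Q l1 l2 <-> Q_orthogonal Q' l1 l2)).
Proof.
move=> h2 hQ hQ' hV.
have [P1 [P2 [P3 [P4 [uP vP [c c0 QP]]]]]] := proper_quad_vertices hQ.
have [R1 [R2 [R3 [R4 [uR vR [d d0 Q'R]]]]]] := proper_quad_vertices hQ'.
have RP : perm_eq [:: R1; R2; R3; R4] [:: P1; P2; P3; P4].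
  by apply: uniq_perm => // p; apply/idP/idP => [/vR/hV/vP | /vP/hV/vR].
have [s s_sign RPs] := vertex_quad_perm uP RP.
have s0 : s != 0 by case: s_sign => ->; rewrite ?oppr_eq0 oner_eq0.
have QQ' := proportional_trans QP
  (proportional_trans (proportional_sym s0 RPs) (proportional_sym d0 Q'R)).
have lam0 : c * (s^-1 * d^-1) != 0 by rewrite !mulf_neq0 ?invr_eq0.
split; [|split].
- move=> l hl.
  exact: bisects_proportional h2 lam0 (proper_quadW hQ) (proper_quadW hQ') hl QQ'.
- by case: QQ' => _ [g b a]; exists (c * (s^-1 * d^-1)).
- by move=> l1 l2 _ _; apply: Q_orthogonal_proportional lam0 QQ'.
Qed.
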